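(* Let $a,b\in\mathbb{R}\setminus\{0\}$. The assignment $k\mapsto aK+bL$, $k^{-1}\mapsto a^{-1}\overline{K}+b^{-1}\overline{L}$ extends to a unital algebra homomorphism $\Phi^{(a,b)}_{\mathcal{H}}:\mathcal{H}_0\to\mathcal{H}$, and this homomorphism is injective.
   Context: $\mathcal{H}_0=\mathcal{H}_0(\mathbf{1},k,k^{-1})$ is the unital $\mathbb{C}$-algebra generated by $k,k^{-1}$ with relations $kk^{-1}=k^{-1}k=\mathbf{1}$ (the Laurent polynomial algebra in $k$). $\mathcal{H}=\mathcal{H}(\mathbf{1},K,\overline{K},L,\overline{L})$ denotes the unital associative $\mathbb{C}$-algebra generated by $K,\overline{K},L,\overline{L}$ subject to the relations $K\overline{K}K=K$, $\overline{K}K\overline{K}=\overline{K}$, $K\overline{K}=\overline{K}K$, $L\overline{L}L=L$, $\overline{L}L\overline{L}=\overline{L}$, $L\overline{L}=\overline{L}L$, and $P+Q=\mathbf{1}$, where $P:=K\overline{K}$ and $Q:=L\overline{L}$. *)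

From HB Require Import structures.
From mathcomp Require Import all_boot all_order all_algebra.
Set Implicit Arguments. Unset Strict Implicit. Unset Printing Implicit Defensive.
Import Order.TTheory GRing.Theory Num.Theory.
Local Open Scope ring_scope.

Definition is_alg_hom (F : numClosedFieldType) (A B : algType F) (f : A -> B) : Prop :=
  [/\ forall x y, f (x + y) = f x + f y,
      forall (c : F) x, f (c *: x) = c *: f x,
      forall x y, f (x * y) = f x * f y &
      f 1 = 1].

Definition H0_rels (F : numClosedFieldType) (B : algType F) (k ki : B) : Prop :=
  k * ki = 1 /\ ki * k = 1.

(* (H0, k, ki) is THE unital algebra presented by generators k, k^{-1} and
   relations k k^{-1} = k^{-1} k = 1 (universal property of a presentation). *)
Definition is_H0_presentation (F : numClosedFieldType) (H0 : algType F) (k ki : H0) : Prop :=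
  H0_rels k ki /\
  forall (B : algType F) (k' ki' : B), H0_rels k' ki' ->
    (exists f : H0 -> B, is_alg_hom f /\ f k = k' /\ f ki = ki') /\
    (forall f g : H0 -> B, is_alg_hom f -> is_alg_hom g ->
        f k = g k -> f ki = g ki -> forall x, f x = g x).

Definition H_rels (F : numClosedFieldType) (B : algType F) (K Kb L Lb : B) : Prop :=
  [/\ K * Kb * K = K, Kb * K * Kb = Kb & K * Kb = Kb * K] /\
  [/\ L * Lb * L = L, Lb * L * Lb = Lb & L * Lb = Lb * L] /\
  K * Kb + L * Lb = 1.

Definition is_H_presentation (F : numClosedFieldType) (H : algType F) (K Kb L Lb : H) : Prop :=
  H_rels K Kb L Lb /\
  forall (B : algType F) (K' Kb' L' Lb' : B), H_rels K' Kb' L' Lb' ->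
    (exists f : H -> B, is_alg_hom f /\ f K = K' /\ f Kb = Kb' /\ f L = L' /\ f Lb = Lb') /\
    (forall f g : H -> B, is_alg_hom f -> is_alg_hom g ->
        f K = g K -> f Kb = g Kb -> f L = g L -> f Lb = g Lb -> forall x, f x = g x).

From HB Require Import structures.
From mathcomp Require Import all_boot all_order all_algebra.
Set Implicit Arguments. Unset Strict Implicit. Unset Printing Implicit Defensive.
Import Order.TTheory GRing.Theory Num.Theory.
Local Open Scope ring_scope.

(* Proof of Proposition 1.
   In H the elements P := K Kb and Q := L Lb are idempotents with P + Q = 1,
   hence orthogonal (P Q = Q P = 0).  Since K, Kb absorb P and L, Lb absorb Q,
   all "mixed" products K Lb, L Kb, Kb L, Lb K vanish.  Consequently
   (aK + bL)(a^-1 Kb + b^-1 Lb) = P + Q = 1 and symmetrically, so the universal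
   property of H0 yields the homomorphism Phi.
   For injectivity we build a retraction: a^-1 k and a ki are mutually inverse
   in H0, so (K, Kb, L, Lb) |-> (a^-1 k, a ki, 0, 0) satisfies the relations
   of H and defines psi : H -> H0.  Then psi o Phi fixes k and ki, hence is
   the identity by the uniqueness part of the presentation of H0, and Phi is
   injective. *)

Lemma alg_hom_comp (F : numClosedFieldType) (A B C : algType F)
    (f : A -> B) (g : B -> C) :
  is_alg_hom f -> is_alg_hom g -> is_alg_hom (g \o f).
Proof.
move=> [fD fZ fM f1] [gD gZ gM g1]; split=> /=.
- by move=> x y; rewrite fD gD.
- by move=> c x; rewrite fZ gZ.
- by move=> x y; rewrite fM gM.
- by rewrite f1 g1.
Qed.

Lemma alg_hom_comb (F : numClosedFieldType) (A B : algType F) (f : A -> B)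
    (a b : F) (x y : A) :
  is_alg_hom f -> f (a *: x + b *: y) = a *: f x + b *: f y.
Proof. by move=> [fD fZ _ _]; rewrite fD !fZ. Qed.

Lemma idem_compl_orth (R : pzRingType) (e f : R) :
  e * e = e -> e + f = 1 -> e * f = 0 /\ f * e = 0.
Proof.
move=> ee ef; have -> : f = 1 - e by rewrite -ef addrAC subrr add0r.
by rewrite mulrBr mulrBl mulr1 mul1r ee subrr.
Qed.

Lemma mul_through_orth (R : pzRingType) (x y e f : R) :
  x * e = x -> f * y = y -> e * f = 0 -> x * y = 0.
Proof. by move=> xe fy ef; rewrite -xe -fy mulrA -(mulrA x) ef mulr0 mul0r. Qed.

Section HRelations.
Variables (F : numClosedFieldType) (B : algType F) (K Kb L Lb : B).
Hypothesis rels : H_rels K Kb L Lb.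

Lemma H_mixed_zero : [/\ K * Lb = 0, L * Kb = 0, Kb * L = 0 & Lb * K = 0].
Proof.
have [[KKbK KbKKb KKbC] [[LLbL LbLLb LLbC] PQ1]] := rels.
have [PQ QP] : K * Kb * (L * Lb) = 0 /\ L * Lb * (K * Kb) = 0.
  by apply: idem_compl_orth; rewrite // mulrA KKbK.
have KP : K * (K * Kb) = K by rewrite KKbC mulrA KKbK.
have KbP : Kb * (K * Kb) = Kb by rewrite mulrA KbKKb.
have PKb : K * Kb * Kb = Kb by rewrite KKbC KbKKb.
have PK : K * Kb * K = K by [].
have LQ : L * (L * Lb) = L by rewrite LLbC mulrA LLbL.
have LbQ : Lb * (L * Lb) = Lb by rewrite mulrA LbLLb.
have QLb : L * Lb * Lb = Lb by rewrite LLbC LbLLb.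
have QL : L * Lb * L = L by [].
split.
- exact: mul_through_orth KP QLb PQ.
- exact: mul_through_orth LQ PKb QP.
- exact: mul_through_orth KbP QL PQ.
- exact: mul_through_orth LbQ PK QP.
Qed.

Lemma H0_rels_image (a b : F) : a != 0 -> b != 0 ->
  H0_rels (a *: K + b *: L) (a^-1 *: Kb + b^-1 *: Lb).
Proof.
move=> a0 b0; have [KLb LKb KbL LbK] := H_mixed_zero.
have [[_ _ KKbC] [[_ _ LLbC] PQ1]] := rels.
split; rewrite mulrDl !mulrDr -!scalerAl -!scalerAr !scalerA.
- by rewrite KLb LKb !scaler0 addr0 add0r !mulfV // !scale1r.
- by rewrite KbL LbK !scaler0 addr0 add0r !mulVf // !scale1r -KKbC -LLbC.
Qed.

End HRelations.

Lemma H0_rels_scale (F : numClosedFieldType) (B : algType F) (u v : B) (c : F) :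
  c != 0 -> H0_rels u v -> H0_rels (c^-1 *: u) (c *: v).
Proof.
move=> c0 [uv vu].
by split; rewrite -scalerAl -scalerAr scalerA ?mulVf ?mulfV // scale1r.
Qed.

Lemma H_rels_of_inverse (F : numClosedFieldType) (B : algType F) (u v : B) :
  H0_rels u v -> H_rels u v 0 0.
Proof.
move=> [uv vu]; split; last split.
- by split; rewrite ?uv ?vu ?mul1r.
- by split; rewrite !mulr0.
- by rewrite mulr0 uv addr0.
Qed.

Lemma presentation_retraction_inj (F : numClosedFieldType) (H0 B : algType F)
    (k ki : H0) (f : H0 -> B) (g : B -> H0) :
  is_H0_presentation k ki -> is_alg_hom f -> is_alg_hom g ->
  g (f k) = k -> g (f ki) = ki -> injective f.
Proof.
move=> [rels0 univ] homf homg gfk gfki x y fxy.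
have [_ uniq] := univ H0 k ki rels0.
have hom_id : is_alg_hom (@id H0) by [].
have gf_id := uniq (g \o f) id (alg_hom_comp homf homg) hom_id gfk gfki.
by rewrite -(gf_id x) -(gf_id y) /= fxy.
Qed.

Theorem proposition1 (F : numClosedFieldType) (a b : F)
  (H0 : algType F) (k ki : H0) (H : algType F) (K Kb L Lb : H) :
  a \is Num.real -> b \is Num.real -> a != 0 -> b != 0 ->
  is_H0_presentation k ki -> is_H_presentation K Kb L Lb ->
  exists Phi : H0 -> H,
    [/\ is_alg_hom Phi,
        Phi k = a *: K + b *: L,
        Phi ki = a^-1 *: Kb + b^-1 *: Lb &
        injective Phi].
Proof.
move=> _ _ a0 b0 presH0 [relsH univH].
have [rels0 univ0] := presH0.
have [[Phi [homPhi [Phik Phiki]]] _] := univ0 H _ _ (H0_rels_image relsH a0 b0).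
have relsPsi := H_rels_of_inverse (H0_rels_scale a0 rels0).
have [[psi [homPsi [psiK [psiKb [psiL psiLb]]]]] _] := univH H0 _ _ _ _ relsPsi.
exists Phi; split=> //.
apply: (presentation_retraction_inj presH0 homPhi homPsi).
- rewrite Phik alg_hom_comb // psiK psiL scaler0 addr0 scalerA.
  by rewrite mulfV // scale1r.
- rewrite Phiki alg_hom_comb // psiKb psiLb scaler0 addr0 scalerA.
  by rewrite mulVf // scale1r.
Qed.
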